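(* Let $\mathrm{M}$ be a simple matroid of rank at least $3$ on ground set $E$, and let $i\in E$ be an element that is not a coloop such that the deletion $\mathrm{M}\setminus\{i\}$ is a Boolean matroid. Then there exists a rank-$1$ flat $F$ of $\mathrm{M}$ with $F\in\underline{S}_i$.
   Context: $\underline{S}_i$ is the family of flats $F$ of $\mathrm{M}$ such that $\varnothing\subsetneq F\subsetneq E\setminus\{i\}$ and $F\cup\{i\}$ is a flat. A Boolean matroid is one in which every subset of the ground set is independent. *)

From mathcomp Require Import all_boot.
Set Implicit Arguments. Unset Strict Implicit. Unset Printing Implicit Defensive.

Section Matroid.
Variable T : finType.

(* A matroid on ground set E = T is given by its family of independent sets. *)
Definition is_matroid (indep : {set T} -> bool) : Prop :=
  [/\ indep set0,
      (forall A B : {set T}, A \subset B -> indep B -> indep A) &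
      (forall A B : {set T}, indep A -> indep B -> #|A| < #|B| ->
         exists2 x, x \in B :\: A & indep (x |: A))].

Variable indep : {set T} -> bool.

Definition mrank (A : {set T}) : nat :=
  \max_(B in powerset A | indep B) #|B|.

Definition is_basis (B : {set T}) : bool :=
  indep B && [forall x, (x \notin B) ==> ~~ indep (x |: B)].

Definition is_flat (F : {set T}) : bool :=
  [forall x, (x \notin F) ==> (mrank F < mrank (x |: F))].

Definition simple_matroid : bool :=
  [forall x, indep [set x]] && [forall x, forall y, (x != y) ==> indep [set x; y]].

Definition is_coloop (i : T) : bool := [forall B, is_basis B ==> (i \in B)].

(* deletion M \ {i}: ground set E \ {i}, independent sets = independent sets
   of M contained in E \ {i}.  It is Boolean iff all its subsets are independent. *)
Definition deletion_boolean (i : T) : bool :=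
  [forall A : {set T}, (A \subset [set~ i]) ==> indep A].

Definition in_S (i : T) (F : {set T}) : bool :=
  [&& is_flat F, set0 \proper F, F \proper [set~ i] & is_flat (i |: F)].

End Matroid.

From mathcomp Require Import all_boot zify.

Set Implicit Arguments.
Unset Strict Implicit.
Unset Printing Implicit Defensive.

(* Deleting [i] leaves a Boolean matroid and [i] is no coloop, so [E \ i] is
   the unique basis and [E] is dependent; hence [|E \ i| >= 3].  It suffices
   to find [x <> i] such that [{i, x}] is a flat, i.e. [{i, x, y}] is
   independent for every further [y]; then [{x}] is the required rank-1 flat.
   If no triple [{i, a, b}] is dependent, any [x] works.  Otherwise fix a
   dependent [{i, a, b}] and [x] outside it: were [{i, x, y}] dependent too,
   [i] would lie in the closures of both [{a, b}] and [{x, y}]; as their union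
   is independent and avoids [i], it would lie in the closure of their
   intersection, a subset of [{y}], contradicting simplicity. *)

Section MatroidFacts.
Variables (T : finType) (indep : {set T} -> bool).

Lemma mrank_indep (A : {set T}) : indep A -> mrank indep A = #|A|.
Proof.
move=> iA; apply/eqP; rewrite eqn_leq; apply/andP; split.
  by apply/bigmax_leqP => B /andP[]; rewrite powersetE => /subset_leq_card.
by apply: (leq_bigmax_cond (P := fun B => (B \in powerset A) && indep B));
  rewrite powersetE subxx iA.
Qed.

Lemma flat_indep (F : {set T}) :
  indep F -> (forall y, y \notin F -> indep (y |: F)) -> is_flat indep F.
Proof.
move=> iF extF; apply/forallP => y; apply/implyP => yF.
by rewrite !mrank_indep ?extF // cardsU1 yF.
Qed.

Hypothesis indep_matroid : is_matroid indep.

Lemma indep_sub (A B : {set T}) : A \subset B -> indep B -> indep A.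
Proof. by case: indep_matroid => _ + _; apply. Qed.

Lemma indep_augment (A B : {set T}) : indep A -> indep B ->
  exists2 C, indep C & [/\ A \subset C, C \subset A :|: B & #|B| <= #|C|].
Proof.
case: indep_matroid => _ _ augment iA iB.
have [n] := ubnP (#|B| - #|A|); elim: n A iA => // n IH A iA ltBA.
have [leBA | ltAB] := leqP #|B| #|A|; first by exists A; rewrite ?subsetUl.
have [x /setDP[xB xA] ixA] := augment A B iA iB ltAB.
have [|C iC [sxAC sCxAB leBC]] := IH (x |: A) ixA.
  by rewrite cardsU1 xA; lia.
exists C => //; split=> //; first exact: subset_trans (subsetUr [set x] A) sxAC.
have xAB : [set x] :|: (A :|: B) = A :|: B.
  by apply/setUidPr; rewrite sub1set inE xB orbT.
by rewrite -setUA xAB in sCxAB.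
Qed.

(* In closure terms: [i \in cl I :&: cl J] implies [i \in cl (I :&: J)]
   when [I :|: J] is independent. *)
Lemma dep_setU1I i (I J : {set T}) :
  indep (I :|: J) -> i \notin I :|: J ->
  ~~ indep (i |: I) -> ~~ indep (i |: J) -> ~~ indep (i |: (I :&: J)).
Proof.
move=> iIJ iNIJ depI depJ; apply/negP => iK.
have [C iC [sKC sC leC]] := indep_augment iK iIJ.
have iC_i : i \in C by apply: (subsetP sKC); rewrite setU11.
have missing_from_C (X : {set T}) :
    ~~ indep (i |: X) -> exists2 e, e \in X & e \notin C.
  move=> depX; apply/subsetPn; apply: contra depX => sXC.
  by apply: indep_sub iC; rewrite subUset sub1set iC_i.
have [e1 e1I e1C] := missing_from_C I depI.
have [e2 e2J e2C] := missing_from_C J depJ.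
have e1J : e1 \notin J.
  by apply: contra e1C => e1J; apply: (subsetP sKC); rewrite !inE e1I e1J orbT.
have e12 : e1 != e2 by apply: contraNneq e1J => ->.
have sCD : C \subset (i |: (I :|: J)) :\: [set e1; e2].
  apply/subsetP => z zC; rewrite !inE.
  have ze1 : z != e1 by apply: contraNneq e1C => <-.
  have ze2 : z != e2 by apply: contraNneq e2C => <-.
  rewrite (negbTE ze1) (negbTE ze2) /=.
  by move: (subsetP sC z zC); rewrite !inE => /or3P[/orP[|/andP[]]||] ->;
    rewrite ?orbT.
have sub12 : [set e1; e2] \subset i |: (I :|: J).
  by rewrite subUset !sub1set !inE e1I e2J !orbT.
have IJ_gt0 : 0 < #|I :|: J| by apply/card_gt0P; exists e1; rewrite inE e1I.
have := subset_leq_card sCD.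
rewrite cardsD (setIidPr sub12) cards2 e12 cardsU1 (negbTE iNIJ) add1n subSS.
by rewrite subn1 => /(leq_trans leC); rewrite leqNgt ltn_predL IJ_gt0.
Qed.

Lemma mrank_ltn_card (A : {set T}) : ~~ indep A -> mrank indep A < #|A|.
Proof.
move=> depA; have [i0 _ _] := indep_matroid.
have A_gt0 : 0 < #|A|.
  by rewrite card_gt0; apply: contraNneq depA => ->.
rewrite -(prednK A_gt0) ltnS; apply/bigmax_leqP => B /andP[].
rewrite powersetE => sBA iB; rewrite -ltnS prednK // proper_card //.
by rewrite properEneq sBA andbT; apply: contraNneq depA => <-.
Qed.

Lemma noncoloop_dep_setT i :
  ~~ is_coloop indep i -> indep [set~ i] -> ~~ indep [set: T].
Proof.
rewrite negb_forall => /existsP[B]; rewrite negb_imply => /andP[/andP[iB]].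
move=> /forallP maxB iNB iCi.
have eB : B = [set~ i].
  apply/eqP; rewrite eqEsubset; apply/andP; split.
    by apply/subsetP => z zB; rewrite !inE; apply: contraNneq iNB => <-.
  apply/subsetP => z zCi; apply/negPn/negP => zNB.
  move: (implyP (maxB z) zNB); rewrite (indep_sub _ iCi) //.
  by rewrite subUset sub1set zCi; apply/subsetP => w wB; rewrite !inE;
    apply: contraNneq iNB => <-.
by rewrite -(setUCr [set i]) -eB; apply: (implyP (maxB i)).
Qed.

End MatroidFacts.

Section BooleanDeletion.
Variables (T : finType) (indep : {set T} -> bool) (i : T).
Hypothesis indep_matroid : is_matroid indep.
Hypothesis indep_pair : forall x y, x != y -> indep [set x; y].
Hypothesis indep_deletion : forall A : {set T}, A \subset [set~ i] -> indep A.

Lemma exists_flat_pair : 3 <= #|[set~ i]| ->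
  exists2 x, x != i & is_flat indep [set i; x].
Proof.
move=> card3.
suff [x xi indep_ixy] : exists2 x, x != i &
    forall y, y \notin [set i; x] -> indep (y |: [set i; x]).
  by exists x => //; apply: flat_indep indep_ixy; rewrite indep_pair // eq_sym.
case: (boolP [exists a, exists b,
               [&& a != i, b != i & ~~ indep (i |: [set a; b])]]); last first.
  move=> /existsPn noDep.
  have [x] : exists x, x \in [set~ i] by apply/card_gt0P; lia.
  rewrite !inE => xi; exists x => // y; rewrite !inE negb_or => /andP[yi _].
  by move/existsPn: (noDep y) => /(_ x); rewrite yi xi negbK setUCA.
case/existsP => a /existsP[b /and3P[ai bi dep_iab]].
have [x] : exists x, x \in [set~ i] :\: [set a; b].
  apply/card_gt0P; rewrite cardsD.
  have : #|[set~ i] :&: [set a; b]| <= 2.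
    apply: leq_trans (subset_leq_card (subsetIr _ _)) _.
    by rewrite cards2; case: (a != b).
  lia.
rewrite !inE negb_or => /andP[/andP[xa xb] xi].
exists x => // y; rewrite !inE negb_or => /andP[yi yx].
apply/negPn/negP; rewrite setUCA => dep_ixy.
have indep_abyx : indep ([set a; b] :|: [set y; x]).
  apply: indep_deletion; apply/subsetP => z.
  by rewrite !inE => /or3P[/orP[]||] /eqP->.
have iN_abyx : i \notin [set a; b] :|: [set y; x].
  by rewrite !inE ![i == _]eq_sym (negbTE ai) (negbTE bi) (negbTE yi) (negbTE xi).
have indep_i_meet : indep (i |: ([set a; b] :&: [set y; x])).
  have iy : i != y by rewrite eq_sym.
  apply: (indep_sub indep_matroid) (indep_pair iy).
  apply/subsetP => z; rewrite !inE => /orP[->//|/andP[zab /orP[->|/eqP zx]]];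
    rewrite ?orbT //.
  by move: zab; rewrite zx (negbTE xa) (negbTE xb).
by have /negP := dep_setU1I indep_matroid indep_abyx iN_abyx dep_iab dep_ixy.
Qed.

End BooleanDeletion.

Theorem lemma3p5 (T : finType) (indep : {set T} -> bool) (i : T) :
  is_matroid indep ->
  simple_matroid indep ->
  3 <= mrank indep [set: T] ->
  ~~ is_coloop indep i ->
  deletion_boolean indep i ->
  exists F : {set T}, [/\ is_flat indep F, mrank indep F = 1 & in_S indep i F].
Proof.
move=> matroid /andP[/forallP indep1 /forallP indep2] rank3 ncoloop /forallP bool_i.
have indep_pair x y : x != y -> indep [set x; y].
  exact: implyP (forallP (indep2 x) y).
have indep_deletion (A : {set T}) : A \subset [set~ i] -> indep A.
  exact: implyP (bool_i A).
have depT := noncoloop_dep_setT matroid ncoloop (indep_deletion _ (subxx _)).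
have card3 : 3 <= #|[set~ i]|.
  by have := mrank_ltn_card matroid depT; rewrite cardsC1 cardsT; lia.
have [x xi flat_ix] := exists_flat_pair matroid indep_pair indep_deletion card3.
have flat_x : is_flat indep [set x].
  by apply: flat_indep (indep1 x) _ => y; rewrite inE => /indep_pair.
exists [set x]; split=> //; first by rewrite mrank_indep ?cards1.
apply/and4P; split=> //.
- by rewrite proper0; apply/set0Pn; exists x; rewrite inE.
- by rewrite properEcard sub1set !inE xi cards1; lia.
Qed.
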